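(* Let $N\ge2$ and $0\le k\le N$. For complex $\xi_1,\dots,\xi_N$ with $|\xi_i|<1$ for all $i$, \[ \sum_{\sigma\in S_N}\operatorname{sgn}(\sigma)\prod_{j=1}^{k}\Big(\frac{1-\xi_j}{1-\xi_{\sigma(j)}}\Big)^{j-1}\prod_{j=k+1}^{N}\Big(\frac{1-\xi_j}{1-\xi_{\sigma(j)}}\Big)^{j-2}\cdot\frac{\prod_{j=2}^N\xi_{\sigma(j)}^{\,j-1}}{\prod_{m=k+1}^{N}\Big(1-\prod_{l=m}^N\xi_{\sigma(l)}\Big)} =\prod_{i=1}^k(1-\xi_i)\prod_{1\le i<j\le N}\frac{\xi_j-\xi_i}{1-\xi_i}\prod_{i=1}^N\frac{1}{1-\xi_i}, \] where empty products equal $1$. *)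

(* Complex numbers are modelled by an arbitrary
   numClosedFieldType C (of which the complex numbers are an instance). *)
From HB Require Import structures.
From mathcomp Require Import all_boot all_order all_algebra all_fingroup.
Set Implicit Arguments. Unset Strict Implicit. Unset Printing Implicit Defensive.

From HB Require Import structures.
From mathcomp Require Import all_boot all_order all_algebra all_fingroup.
From mathcomp Require Import ring.

Set Implicit Arguments.
Unset Strict Implicit.
Unset Printing Implicit Defensive.
Import Order.TTheory GRing.Theory Num.Theory.
Local Open Scope ring_scope.

(* Put y_j = xi_j / (1 - xi_j).  Each summand splits as the permutation-free
   constant prod_i (1 - xi_i)^(i - [k <= i]) times sgn(s) prod_i w_i(s i) / D(s),
   where w_i(j) = y_j^i (1 - xi_j)^[k <= i] and D(s) is the product of tail
   denominators.  The sum of the second factors is the Vandermonde determinant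
   V(y), by induction on N: summing first over s 0, the inner sums are, by
   induction, the Vandermonde minors of the remaining variables, so the total is
   the Laplace expansion along the first row of V(y) with that row replaced by
   w_0.  For k > 0 this row is all ones; for k = 0 it is (1 - xi_j), and that
   determinant is (1 - prod_j xi_j) V(y), which cancels the extra tail factor.
   Expanding V(y) = prod_(i<j) (y_j - y_i) then gives the right-hand side. *)

Lemma sum_perm_lift0 (R : nmodType) n (F : 'S_n.+1 -> R) :
  \sum_(s : 'S_n.+1) F s = \sum_(j : 'I_n.+1) \sum_(t : 'S_n) F (lift_perm ord0 j t).
Proof.
rewrite (partition_big (fun s : 'S_n.+1 => s ord0) predT) //=.
apply: eq_bigr => j0 _.
rewrite (reindex (lift_perm ord0 j0)); last first.
  pose ulsf i (s : 'S_n.+1) k := odflt k (unlift (s i) (s (lift i k))).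
  have ulsfK i (s : 'S_n.+1) k : lift (s i) (ulsf i s k) = s (lift i k).
    rewrite /ulsf; have:= neq_lift i k.
    by rewrite -(can_eq (permK s)) => /unlift_some[] ? ? ->.
  have inj_ulsf : injective (ulsf ord0 _).
    move=> s; apply: can_inj (ulsf (s ord0) s^-1%g) _ => k'.
    by rewrite {1}/ulsf ulsfK !permK liftK.
  exists (fun s => perm (inj_ulsf s)) => [s _ | s].
    by apply/permP=> k'; rewrite permE /ulsf lift_perm_lift lift_perm_id liftK.
  move/(s _ =P _) => si0; apply/permP=> k.
  case: (unliftP ord0 k) => [k'|] ->; rewrite ?lift_perm_id //.
  by rewrite lift_perm_lift -si0 permE ulsfK.
by apply: eq_bigl => s; rewrite lift_perm_id eqxx.
Qed.

Lemma normr_lt1_subr_neq0 (R : numDomainType) (a : R) : `|a| < 1 -> 1 - a != 0.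
Proof. by rewrite subr_eq0; apply: contraTneq => <-; rewrite normr1 ltxx. Qed.

Lemma normr_prod_lt1 (R : numDomainType) n (x : 'I_n.+1 -> R) :
  (forall i, `|x i| < 1) -> `|\prod_i x i| < 1.
Proof.
move=> x1; rewrite normr_prod big_ord_recl; apply: (le_lt_trans _ (x1 ord0)).
by apply: ler_piMr => //; apply: prodr_ile1 => i _; rewrite normr_ge0 ltW.
Qed.

Lemma divr_powz_mulXn (F : fieldType) (a b c : F) (i : nat) (d : bool) : b != 0 ->
  (a / b) ^ (i%:Z - d%:Z) * c ^+ i = a ^ (i%:Z - d%:Z) * ((c / b) ^+ i * b ^+ d).
Proof.
move=> b0; rewrite expfzMl exprz_inv -mulrA; congr (_ * _).
rewrite opprB expfzDr // -invr_expz -!exprnP exprMn exprVn.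
by field; rewrite expf_neq0.
Qed.

Lemma prod_powz_split (R : comUnitRingType) N k (f : 'I_N -> R) :
  (\prod_(i < N | (i < k)%N) f i ^+ i) * \prod_(i < N | (k <= i)%N) f i ^ (i%:Z - 1)
  = \prod_(i < N) f i ^ (i%:Z - (k <= i)%N%:Z).
Proof.
rewrite big_mkcond [X in _ * X]big_mkcond -big_split; apply: eq_bigr => i _ /=.
by case: leqP => _; rewrite ?mul1r ?mulr1 ?subr0.
Qed.

Lemma prod_powz_mul_prodVn (F : fieldType) N k (a : 'I_N -> F) : (forall i, a i != 0) ->
  \prod_(i < N) a i ^ (i%:Z - (k <= i)%N%:Z) * \prod_(i < N) a i ^- i
  = \prod_(i < N | (i < k)%N) a i * \prod_(i < N) (a i)^-1.
Proof.
move=> a0; rewrite -big_split [X in X * _]big_mkcond -big_split; apply: eq_bigr => i _ /=.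
have ai0 : a i ^+ i != 0 by rewrite expf_neq0.
case: leqP => _ /=.
  by rewrite expfzDr // exprN1 -exprnP mul1r mulrAC mulfV ?mul1r.
by rewrite subr0 -exprnP mulfV // mulfV.
Qed.

Lemma prod_ord_lt_const (R : comPzSemiRingType) N (j : 'I_N) (c : R) :
  \prod_(i < N | (i < j)%N) c = c ^+ j.
Proof.
rewrite -(big_ord_widen_cond N (fun _ => true) (fun _ => c) (ltnW (ltn_ord j))).
by rewrite prodr_const card_ord.
Qed.

Section VandermondeFirstRow.
Variables (F : fieldType) (n : nat) (y : 'I_n.+1 -> F).

Definition vdm_row0 (u : 'I_n.+1 -> F) : 'M[F]_n.+1 :=
  \matrix_(i, j) (if i == ord0 then u j else y j ^+ i).

Let V := Vandermonde n.+1 (\row_j y j).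

Lemma vdm_row0_1 : vdm_row0 (fun=> 1) = V.
Proof. by apply/matrixP => i j; rewrite !mxE; case: eqP => // ->. Qed.

Lemma det_vdm_row0B u v :
  \det (vdm_row0 (fun j => u j - v j)) = \det (vdm_row0 u) - \det (vdm_row0 v).
Proof.
rewrite -[\det (vdm_row0 u)]mul1r -mulN1r.
apply: (determinant_multilinear (i0 := ord0)).
- by apply/rowP => j; rewrite !mxE !eqxx mul1r mulN1r.
- by apply/matrixP => i j; rewrite /vdm_row0 !mxE eq_sym (negbTE (neq_lift _ _)).
- by apply/matrixP => i j; rewrite /vdm_row0 !mxE eq_sym (negbTE (neq_lift _ _)).
Qed.

Lemma det_vdm_row0E u : \det (vdm_row0 u) =
  \sum_(r < n.+1) (-1) ^+ r * u r * (\prod_(i < n) y (lift r i))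
                  * \det (Vandermonde n (\row_i y (lift r i))).
Proof.
rewrite (expand_det_row _ ord0); apply: eq_bigr => r _.
rewrite /cofactor /vdm_row0 !mxE eqxx add0n.
have -> : row' ord0 (col' r (vdm_row0 u))
    = Vandermonde n (\row_i y (lift r i)) *m diag_mx (\row_i y (lift r i)).
  by apply/matrixP => i j; rewrite mul_mx_diag !mxE /= -exprSr.
rewrite det_mulmx det_diag.
under eq_bigr do rewrite mxE.
ring.
Qed.

Definition bidiag1 : 'M[F]_n.+1 := \matrix_(i, l) ((i == l) + (i == l.+1 :> nat))%:R.

Lemma det_bidiag1 : \det bidiag1 = 1.
Proof.
rewrite det_trig.
  by apply: big1 => i _; rewrite mxE eqxx (ltn_eqF (ltnSn i)).
apply/is_trig_mxP => i j lt_ij.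
by rewrite mxE -val_eqE /= (ltn_eqF lt_ij) (@ltn_eqF i j.+1 (ltnW lt_ij)).
Qed.

(* Scaling column j by 1 + y j turns the rows into y, y + y^2, y^2 + y^3, ...,
   i.e. a unit lower bidiagonal combination of the rows of V diag(y). *)
Lemma det_vdm_row0_frac : (forall j, 1 + y j != 0) ->
  \det (vdm_row0 (fun j => y j / (1 + y j))) = \prod_j (y j / (1 + y j)) * \det V.
Proof.
move=> y1.
have scale : vdm_row0 (fun j => y j / (1 + y j)) *m diag_mx (\row_j (1 + y j))
    = bidiag1 *m (V *m diag_mx (\row_j y j)).
  apply/matrixP => i j; rewrite mul_mx_diag !mxE.
  under eq_bigr do rewrite mul_mx_diag !mxE natrD mulrDl.
  rewrite big_split /= (bigD1 i) //= eqxx mul1r big1 ?addr0; last first.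
    by move=> l /negbTE; rewrite eq_sym => ->; rewrite mul0r.
  case: (unliftP ord0 i) => [i'|] ->; last first.
    by rewrite eqxx big1 ?addr0 ?expr0 ?mul1r ?divfK // => l _; rewrite mul0r.
  rewrite (bigD1 (widen_ord (leqnSn n) i')) //= eqxx mul1r big1 ?addr0.
    by rewrite mulrDr mulr1 addrC exprSr.
  move=> l nl; rewrite (_ : (i'.+1 == l.+1) = false) ?mul0r //.
  by apply/negbTE; rewrite eqSS; apply: contra nl => /eqP e; apply/eqP/val_inj.
have P0 : \prod_j (1 + y j) != 0.
  by rewrite prodf_seq_neq0; apply/allP => j _; apply: y1.
have := congr1 determinant scale.
rewrite !det_mulmx det_bidiag1 mul1r !det_diag.
under eq_bigr do rewrite mxE.
under [\prod_j (\row_j0 y j0) _ _]eq_bigr do rewrite mxE.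
move=> e; apply: (mulIf P0); rewrite e big_split /= prodfV.
by field.
Qed.

End VandermondeFirstRow.

Definition odds (F : fieldType) n (x : 'I_n -> F) j := x j / (1 - x j).

Lemma prod_odds_sub (F : fieldType) N (x : 'I_N -> F) : (forall j, 1 - x j != 0) ->
  \prod_(i < N) \prod_(j < N | (i < j)%N) (odds x j - odds x i)
  = \prod_(i < N) \prod_(j < N | (i < j)%N) ((x j - x i) / (1 - x i))
    * \prod_(j < N) (1 - x j) ^- j.
Proof.
move=> x1.
have oddsB i j : odds x j - odds x i = (x j - x i) / (1 - x i) * (1 - x j)^-1.
  by rewrite /odds; field; rewrite !x1.
under eq_bigr do under eq_bigr do rewrite oddsB.
under eq_bigr do rewrite big_split /=.
rewrite big_split /=; congr (_ * _); rewrite (exchange_big_dep predT) //=.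
by apply: eq_bigr => j _; rewrite prod_ord_lt_const exprVn.
Qed.

Lemma det_vdm_row0_odds (F : fieldType) n (x : 'I_n.+1 -> F) :
  (forall j, 1 - x j != 0) ->
  \det (vdm_row0 (odds x) (fun j => 1 - x j))
  = (1 - \prod_j x j) * \det (Vandermonde n.+1 (\row_j odds x j)).
Proof.
move=> x1.
have odds1 j : 1 + odds x j = (1 - x j)^-1 by rewrite /odds; field; apply: x1.
have xE j : x j = odds x j / (1 + odds x j) by rewrite odds1 invrK /odds divfK.
have odds1_neq0 j : 1 + odds x j != 0 by rewrite odds1 invr_eq0.
rewrite (det_vdm_row0B (odds x) (fun=> 1) x) vdm_row0_1.
have -> : vdm_row0 (odds x) x = vdm_row0 (odds x) (fun j => odds x j / (1 + odds x j)).
  by apply/matrixP => i j; rewrite /vdm_row0 !mxE -xE.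
rewrite det_vdm_row0_frac // (eq_bigr _ (fun j _ => esym (xE j))).
by rewrite mulrBl mul1r.
Qed.

Definition weight (F : fieldType) n (x : 'I_n -> F) (k i : nat) j :=
  odds x j ^+ i * (1 - x j) ^+ (k <= i)%N.

Definition tail_denom (F : fieldType) n (x : 'I_n -> F) (k : nat) (s : 'S_n) :=
  \prod_(i < n | (k <= i)%N) (1 - \prod_(l < n | (i <= l)%N) x (s l)).

Lemma prod_weight_lift_perm (F : fieldType) n (x : 'I_n.+1 -> F) k r (t : 'S_n) :
  \prod_(i < n.+1) weight x k i (lift_perm ord0 r t i) =
  weight x k 0 r * (\prod_(i < n) odds x (lift r i)) *
  \prod_(i < n) weight (fun j => x (lift r j)) k.-1 i (t i).
Proof.
rewrite big_ord_recl lift_perm_id -mulrA; congr (_ * _).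
rewrite [\prod_(i < n) odds x (lift r i)](reindex_inj (@perm_inj _ t)) /= -big_split /=.
apply: eq_bigr => i _; rewrite lift_perm_lift /weight /=.
have -> : (k <= bump 0 i)%N = (k.-1 <= i)%N by case: k.
by rewrite exprS mulrA.
Qed.

Lemma tail_denom_lift_perm (F : fieldType) n (x : 'I_n.+1 -> F) k r (t : 'S_n) :
  tail_denom x k (lift_perm ord0 r t) =
  (1 - \prod_j x j) ^+ (k == 0)%N * tail_denom (fun j => x (lift r j)) k.-1 t.
Proof.
rewrite /tail_denom big_mkcond big_ord_recl /=; congr (_ * _).
  case: k => [|k] //=.
  congr (_ - _); rewrite [RHS](reindex_inj (@perm_inj _ (lift_perm ord0 r t))) /=.
  by apply: eq_bigl.
rewrite [RHS]big_mkcond; apply: eq_bigr => i _ /=.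
have -> : (k <= bump 0 i)%N = (k.-1 <= i)%N by case: k.
case: ifP => // _; congr (_ - _).
rewrite big_mkcond big_ord_recl /= mul1r [RHS]big_mkcond; apply: eq_bigr => l _.
by rewrite lift_perm_lift.
Qed.

Lemma sum_perm_weight (R : numFieldType) n (x : 'I_n -> R) k :
  (forall i, `|x i| < 1) ->
  \sum_(s : 'S_n) (-1) ^+ s * \prod_(i < n) weight x k i (s i) / tail_denom x k s
  = \det (Vandermonde n (\row_j odds x j)).
Proof.
elim: n => [|n IH] in x k *.
  move=> _; rewrite det_mx00 (big_pred1 1%g); last first.
    by move=> s; apply/esym/eqP/permP => -[].
  by rewrite odd_perm1 /tail_denom !big_ord0 expr0 mul1r invr1 mulr1.
move=> x1; have x1_neq0 j := normr_lt1_subr_neq0 (x1 j).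
pose c := (1 - \prod_j x j) ^+ (k == 0)%N.
rewrite sum_perm_lift0.
transitivity (\sum_(r < n.+1) (-1) ^+ r * weight x k 0 r * (\prod_(i < n) odds x (lift r i)) / c
   * \det (Vandermonde n (\row_i odds x (lift r i)))).
  apply: eq_bigr => r _.
  rewrite -(IH (fun j => x (lift r j)) k.-1) => [|i]; last exact: x1.
  rewrite big_distrr; apply: eq_bigr => t _ /=.
  rewrite odd_lift_perm /= signr_addb signr_odd.
  rewrite prod_weight_lift_perm tail_denom_lift_perm invfM.
  rewrite -/c; move: ((-1) ^+ r) ((-1) ^+ t) (weight x k 0 r) (\prod_(i < n) odds x _)
    (\prod_(i < n) weight _ _ _ _) (tail_denom _ _ _) => a b w p q d.
  ring.
under eq_bigr do rewrite mulrAC.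
rewrite -big_distrl -det_vdm_row0E {}/c; case: k => [|k] /=.
  have -> : vdm_row0 (odds x) (weight x 0 0) = vdm_row0 (odds x) (fun j => 1 - x j).
    by apply/matrixP => i j; rewrite /vdm_row0 !mxE /weight expr0 mul1r expr1.
  rewrite det_vdm_row0_odds // expr1 mulrC mulKf //.
  exact/normr_lt1_subr_neq0/normr_prod_lt1.
have -> : vdm_row0 (odds x) (weight x k.+1 0) = vdm_row0 (odds x) (fun=> 1).
  by apply/matrixP => i j; rewrite /vdm_row0 !mxE /weight !expr0 mulr1.
by rewrite vdm_row0_1 expr0 divr1.
Qed.

Theorem lemma3p1 (C : numClosedFieldType) (N k : nat) (xi : 'I_N -> C)
  (hN : (2 <= N)%N) (hk : (k <= N)%N) (hxi : forall i, `|xi i| < 1) :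
  \sum_(s : 'S_N)
     ((-1) ^+ odd_perm s
      * (\prod_(i < N | (i < k)%N) ((1 - xi i) / (1 - xi (s i))) ^+ i)
      * (\prod_(i < N | (k <= i)%N) ((1 - xi i) / (1 - xi (s i))) ^ (i%:Z - 1))
      * ((\prod_(i < N) xi (s i) ^+ i)
         / \prod_(i < N | (k <= i)%N) (1 - \prod_(l < N | (i <= l)%N) xi (s l))))
  = (\prod_(i < N | (i < k)%N) (1 - xi i))
    * (\prod_(i < N) \prod_(j < N | (i < j)%N) ((xi j - xi i) / (1 - xi i)))
    * (\prod_(i < N) (1 - xi i)^-1).
Proof.
have xi1 i : 1 - xi i != 0 := normr_lt1_subr_neq0 (hxi i).
pose K := \prod_(i < N) (1 - xi i) ^ (i%:Z - (k <= i)%N%:Z).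
transitivity (K * \sum_(s : 'S_N)
    (-1) ^+ s * \prod_(i < N) weight xi k i (s i) / tail_denom xi k s).
  rewrite big_distrr; apply: eq_bigr => s _ /=.
  rewrite -(mulrA ((-1) ^+ _)) prod_powz_split mulrA -(mulrA ((-1) ^+ _)) -big_split /=.
  under eq_bigr do rewrite divr_powz_mulXn //.
  by rewrite big_split /= [in LHS]mulrCA -[LHS]mulrA.
rewrite sum_perm_weight // det_Vandermonde.
under eq_bigr do under eq_bigr do rewrite !mxE.
by rewrite prod_odds_sub // mulrCA prod_powz_mul_prodVn // mulrCA mulrA.
Qed.
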